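(* Let $n\ge1$, identify the symmetric group $\mathfrak S_n$ with the group of permutations of $\mathbb Z/n$, let $\gamma$ be the permutation $i\mapsto i+1$, let $(\mathbb Z/n)^*$ be the subgroup of permutations $i\mapsto ki$ with $\gcd(k,n)=1$, and for $d\mid n$ let $(n/d)\mathbb Z/n$ be the cyclic subgroup of order $d$ generated by $\gamma^{n/d}$ (normalized by $(\mathbb Z/n)^*$). Let $S_n=\operatorname{Ind}_{\langle\gamma\rangle}^{\mathfrak S_n}\chi$, where $\chi$ is a faithful one-dimensional complex character of $\langle\gamma\rangle\cong\mathbb Z/n$. Then, in the representation ring (equivalently, as an identity of characters), \[S_n=\sum_{d\mid n}\mu(d)\,\operatorname{Ind}_{((n/d)\mathbb Z/n)\rtimes(\mathbb Z/n)^*}^{\mathfrak S_n}\mathbb 1,\] where $\mathbb 1$ is the trivial representation and $\mu$ is the Möbius function. *)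

From HB Require Import structures.
From mathcomp Require Import all_boot all_order all_algebra all_fingroup all_solvable all_field all_character.
Set Implicit Arguments. Unset Strict Implicit. Unset Printing Implicit Defensive.
Import Order.TTheory GRing.Theory Num.Theory.

(* Throughout, n = m.+1 >= 1 and Z/n is represented by 'I_m.+1 (its
   canonical additive group structure is addition mod n); multiplication
   mod n is computed with inZp. *)

(* Moebius function on positive integers (value at 0 irrelevant). *)
Definition moebius (d : nat) : int :=
  if (0 < d)%N && all (fun p => logn p d == 1)%N (primes d)
  then ((-1) ^+ size (primes d))%R else 0%R.

Definition gamma (m : nat) : {perm 'I_m.+1} :=
  perm (@GRing.addIr _ (inZp 1 : 'I_m.+1)).

Definition units_perm (m : nat) : {set {perm 'I_m.+1}} :=
  [set s : {perm 'I_m.+1} | [exists k : 'I_m.+1,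
      coprime k m.+1 && [forall i : 'I_m.+1, s i == inZp (k * i)]]].

(* ((n/d)Z/n) semidirect (Z/n)^x : the subgroup generated by gamma^(n/d)
   and (Z/n)^x, which equals the product set of the two. *)
Definition affine_sub (m d : nat) : {group {perm 'I_m.+1}} :=
  <<(<[gamma m ^+ (m.+1 %/ d)]> * units_perm m)>>%G.

From HB Require Import structures.
From mathcomp Require Import all_boot all_order all_algebra all_fingroup all_solvable all_field all_character.
From mathcomp Require Import ring zify.
Import Order.TTheory GRing.Theory Num.Theory.
Set Implicit Arguments. Unset Strict Implicit. Unset Printing Implicit Defensive.

(* Let n = m + 1, G = S_n acting on Z/n, C = <gamma> the translations and
   N = (Z/n) x| (Z/n)^x the affine group of Z/n; both C and every
   K_d = ((n/d)Z/n) x| (Z/n)^x are subgroups of N.  By transitivity of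
   induction it suffices to prove the identity already inside N:
     Ind_C^N chi = \sum_(d | n) mu(d) Ind_(K_d)^N 1.
   Evaluated at x |-> u x + b, both sides are averages over the N-conjugates
   x |-> u x + (v b + (1 - u) c), and both averages equal [n | 1 - u] c_n(b),
   where c_n(b) = \sum_(v in (Z/n)^x) w^(v b) is a Ramanujan sum for the
   primitive root w = chi(gamma). *)

Local Open Scope ring_scope.

Lemma moebius_sq_dvd p d : prime p -> (p * p %| d)%N -> moebius d = 0.
Proof.
move=> p_pr ppd; rewrite /moebius; case: ifP => // /andP[d_gt0 /allP logd1].
have p_d : p \in primes d.
  by rewrite mem_primes p_pr d_gt0 (dvdn_trans (dvdn_mulr p (dvdnn p)) ppd).
have p2d : (p ^ 2 %| d)%N by rewrite expnS expn1.
by move: p2d; rewrite pfactor_dvdn // (eqP (logd1 p p_d)).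
Qed.

Lemma moebiusMprime p e : prime p -> (0 < e)%N -> ~~ (p %| e)%N ->
  moebius (p * e) = - moebius e.
Proof.
move=> p_pr e_gt0 p_ndvd_e; have p_gt0 := prime_gt0 p_pr.
have pe_gt0 : (0 < p * e)%N by rewrite muln_gt0 p_gt0.
have p_notin : p \notin primes e by rewrite mem_primes p_pr e_gt0.
have primes_pe : perm_eq (primes (p * e)) (p :: primes e).
  apply: uniq_perm; rewrite ?primes_uniq //= ?p_notin ?primes_uniq //.
  by move=> q; rewrite primesM // primes_prime // !in_cons in_nil orbF.
rewrite /moebius pe_gt0 e_gt0 /= (perm_all _ primes_pe) (perm_size primes_pe) /=.
have -> : (logn p (p * e) == 1)%N.
  by rewrite lognM // logn_prime // eqxx logn_coprime // prime_coprime.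
have -> : all (fun q => logn q (p * e) == 1)%N (primes e) =
          all (fun q => logn q e == 1)%N (primes e).
  apply: eq_in_all => q q_e; rewrite lognM // logn_prime //.
  by have /negbTE -> : q != p by apply: contraNneq p_notin => <-.
by case: (all _ _); rewrite /= ?oppr0 // exprS mulN1r.
Qed.

(* For g > 1 with smallest prime factor p, the divisors of g divisible by p
   are the p e with e | g / p; those with p | e contribute 0, the others
   contribute - mu e, cancelling the divisors of g prime to p. *)
Lemma sum_moebius g : (0 < g)%N ->
  \sum_(d <- divisors g) moebius d = (g == 1)%N%:R :> int.
Proof.
move=> g_gt0; case: (ltngtP g 1) => [|g_gt1|->]; first by rewrite ltnNge g_gt0.
  2: by rewrite /divisors /= big_seq1.
have p_pr := pdiv_prime g_gt1; set p := pdiv g in p_pr *.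
have p_gt0 := prime_gt0 p_pr.
have gE : g = (p * (g %/ p))%N by rewrite mulnC divnK ?pdiv_dvd.
have gp_gt0 : (0 < g %/ p)%N by rewrite divn_gt0 // dvdn_leq ?pdiv_dvd.
have multiples_p : perm_eq [seq (p * e)%N | e <- divisors (g %/ p)]
                           [seq d <- divisors g | (p %| d)%N].
  apply: uniq_perm; rewrite ?filter_uniq ?divisors_uniq //.
    by rewrite map_inj_uniq ?divisors_uniq // => x y /eqP; rewrite eqn_pmul2l // => /eqP.
  move=> x; rewrite mem_filter -dvdn_divisors //; apply/mapP/andP.
    case=> e; rewrite -dvdn_divisors // => e_dvd ->.
    by rewrite dvdn_mulr // gE dvdn_pmul2l.
  case=> px xg; exists (x %/ p)%N; last by rewrite mulnC divnK.
  by rewrite -dvdn_divisors // -(@dvdn_pmul2l p) // -gE mulnC divnK.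
have prime_to_p : perm_eq [seq e <- divisors (g %/ p) | ~~ (p %| e)%N]
                          [seq d <- divisors g | ~~ (p %| d)%N].
  apply: uniq_perm; rewrite ?filter_uniq ?divisors_uniq // => x.
  rewrite !mem_filter -!dvdn_divisors //; case px: (p %| x)%N => //=.
  by rewrite {2}gE Gauss_dvdr // coprime_sym prime_coprime // px.
rewrite (bigID (fun d => p %| d)%N) /= -big_filter -(perm_big _ multiples_p).
rewrite big_map (bigID (fun e => p %| e)%N) /= big_seq_cond big1 ?add0r; last first.
  by move=> e /andP[_ pe]; apply: (moebius_sq_dvd p_pr); rewrite dvdn_pmul2l.
rewrite big_seq_cond (eq_bigr (fun e => - moebius e)); last first.
  move=> e /andP[e_g pe]; apply: moebiusMprime => //.
  by move: e_g; rewrite -dvdn_divisors // => /dvdn_gt0; apply.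
by rewrite sumrN -big_seq_cond -big_filter (perm_big _ prime_to_p) big_filter addNr.
Qed.

Lemma coprime_moebius (R : pzRingType) n v : (0 < n)%N ->
  (coprime v n)%:R = \sum_(d <- divisors n | (d %| v)%N) (moebius d)%:~R :> R.
Proof.
move=> n_gt0; have g_gt0 : (0 < gcdn v n)%N by rewrite gcdn_gt0 n_gt0 orbT.
have divs_gcd : perm_eq [seq d <- divisors n | (d %| v)%N] (divisors (gcdn v n)).
  apply: uniq_perm; rewrite ?filter_uniq ?divisors_uniq // => d.
  by rewrite mem_filter -!dvdn_divisors // dvdn_gcd andbC.
rewrite -big_filter (perm_big _ divs_gcd) -mulrz_sumr sum_moebius //.
by rewrite /coprime; case: (gcdn v n == 1)%N.
Qed.

Lemma sum_multiples (V : nmodType) k d (F : nat -> V) : (0 < d)%N ->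
  \sum_(0 <= v < k * d | (d %| v)%N) F v = \sum_(0 <= j < k) F (j * d)%N.
Proof.
move=> d_gt0; elim: k => [|k IHk]; first by rewrite mul0n !big_geq.
rewrite big_nat_recr //= -IHk mulSn addnC.
rewrite (@big_cat_nat _ _ _ (k * d)) ?leq_addr //=; congr (_ + _).
rewrite -{1}[(k * d)%N]add0n big_addn addKn.
rewrite (eq_bigl (fun i => d %| i)%N); last by move=> i; rewrite dvdn_addl // dvdn_mull.
rewrite big_ltn_cond // dvdn0 add0n big_nat_cond big1 ?addr0 // => i.
by case/andP=> /andP[i_gt0 i_lt_d] /(dvdn_leq i_gt0); rewrite leqNgt i_lt_d.
Qed.

Lemma sum_expr_unity (F : fieldType) (z : F) k : z ^+ k = 1 ->
  \sum_(i < k) z ^+ i = (z == 1)%:R * k%:R.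
Proof.
move=> zk1; have [->|z_neq1] := eqVneq z 1.
  by rewrite mul1r (eq_bigr (fun _ => 1)) => [|i _]; rewrite ?sumr_const ?card_ord ?expr1n.
have /esym/eqP := subrX1 z k; rewrite zk1 subrr mulf_eq0 subr_eq0 (negbTE z_neq1).
by move/eqP->; rewrite mul0r.
Qed.

Lemma card_units_ord n : #|[pred v : 'I_n | coprime v n]| = totient n.
Proof.
rewrite totient_count_coprime big_mkord -sum1_card big_mkcond /=.
by apply: eq_bigr => i _; rewrite coprime_sym.
Qed.

Section RamanujanSums.

Variables (n : nat) (w : algC).
Hypothesis w_prim : n.-primitive_root w.

Let n_gt0 : (0 < n)%N := prim_order_gt0 w_prim.
Let w_dvd k : (w ^+ k == 1) = (n %| k)%N.
Proof. by rewrite (prim_order_dvd w_prim). Qed.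

Definition ramanujan_sum (y : nat) : algC :=
  \sum_(v < n | coprime v n) w ^+ (v * y).

Lemma ramanujan_sumE y : ramanujan_sum y =
  \sum_(d <- divisors n) (moebius d)%:~R * ((n %/ d %| y)%N%:R * (n %/ d)%:R).
Proof.
rewrite /ramanujan_sum big_mkcond /= (eq_bigr (fun v : 'I_n =>
  \sum_(d <- divisors n) (moebius d)%:~R * ((d %| v)%N%:R * w ^+ (v * y)))); last first.
  move=> v _; transitivity ((coprime v n)%:R * w ^+ (v * y)).
    by case: coprime; rewrite ?mul1r ?mul0r.
  rewrite (coprime_moebius _ _ n_gt0) big_mkcond mulr_suml /=.
  by apply: eq_bigr => d _; case: (d %| v)%N; rewrite ?mul1r ?mul0r ?mulr0.
rewrite exchange_big /=; apply: eq_big_seq => d; rewrite -dvdn_divisors // => d_n.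
rewrite -mulr_sumr; congr (_ * _).
have d_gt0 : (0 < d)%N := dvdn_gt0 n_gt0 d_n.
have nE : n = (n %/ d * d)%N by rewrite divnK.
transitivity (\sum_(0 <= v < n | (d %| v)%N) w ^+ (v * y)).
  rewrite big_mkord [RHS]big_mkcond /=; apply: eq_bigr => v _.
  by case: (d %| v)%N; rewrite ?mul1r ?mul0r.
rewrite {1}nE sum_multiples // (eq_bigr (fun j => (w ^+ (d * y)) ^+ j)); last first.
  by move=> j _; rewrite -exprM; congr (_ ^+ _); lia.
rewrite big_mkord sum_expr_unity; last first.
  by apply/eqP; rewrite -exprM w_dvd mulnAC [(d * _)%N]mulnC -nE dvdn_mulr.
by rewrite w_dvd {1}nE mulnC dvdn_pmul2l.
Qed.

Lemma ramanujan_sumM v y : coprime v n -> ramanujan_sum (v * y) = ramanujan_sum y.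
Proof.
move=> v_unit; rewrite !ramanujan_sumE; apply: eq_big_seq => d.
rewrite -dvdn_divisors // => d_n; rewrite Gauss_dvdr // coprime_sym.
exact: coprime_dvdr (dvdn_div d_n) v_unit.
Qed.

Lemma sum_ramanujan_sum_shift y e :
  \sum_(c < n) ramanujan_sum (y + e * c) = (n %| e)%N%:R * n%:R * ramanujan_sum y.
Proof.
rewrite exchange_big /ramanujan_sum mulr_sumr; apply: eq_bigr => v v_unit.
rewrite (eq_bigr (fun c : 'I_n => w ^+ (v * y) * (w ^+ (v * e)) ^+ c)); last first.
  by move=> c _; rewrite mulnDr exprD -exprM; congr (_ * _ ^+ _); lia.
rewrite -mulr_sumr sum_expr_unity; last first.
  by rewrite -exprM; apply/eqP; rewrite w_dvd dvdn_mull.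
by rewrite w_dvd Gauss_dvdr 1?coprime_sym // mulrC.
Qed.

Lemma sum_moebius_dvd y :
  \sum_(d <- divisors n) ((totient n * d)%:R^-1 * (n %/ d %| y)%N%:R) *~ moebius d
  = (totient n * n)%:R^-1 * ramanujan_sum y.
Proof.
rewrite ramanujan_sumE mulr_sumr; apply: eq_big_seq => d.
rewrite -dvdn_divisors // => d_n.
have d_gt0 : (0 < d)%N := dvdn_gt0 n_gt0 d_n.
have q_neq0 : (n %/ d)%:R != 0 :> algC.
  by rewrite pnatr_eq0 -lt0n divn_gt0 // dvdn_leq.
have phi_neq0 : (totient n)%:R != 0 :> algC by rewrite pnatr_eq0 -lt0n totient_gt0.
have d_neq0 : d%:R != 0 :> algC by rewrite pnatr_eq0 -lt0n.
have nE : n%:R = (n %/ d)%:R * d%:R :> algC by rewrite -natrM divnK.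
rewrite -mulrzr !natrM nE; move: q_neq0; set q := (n %/ d)%:R => q_neq0.
by field; rewrite phi_neq0 q_neq0 d_neq0.
Qed.

Let n_neq0 : n%:R != 0 :> algC. Proof. by rewrite pnatr_eq0 -lt0n. Qed.

(* Orbit sum of the character side: (1/n) \sum_(v, c) [n | e] w^(v b + e c). *)
Lemma orbit_sum_character b e :
  n%:R^-1 * \sum_(v < n | coprime v n) \sum_(c < n) ((n %| e)%N%:R * w ^+ (v * b + e * c))
  = (n %| e)%N%:R * ramanujan_sum b.
Proof.
have [n_e|] := boolP (n %| e)%N; last first.
  by rewrite !mul0r big1 ?mulr0 // => v _; rewrite big1 // => c _; rewrite mul0r.
rewrite mul1r /ramanujan_sum mulr_sumr; apply: eq_bigr => v _.
rewrite (eq_bigr (fun _ => w ^+ (v * b))); last first.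
  move=> c _; rewrite mul1r exprD.
  have /eqP -> : w ^+ (e * c) == 1 by rewrite w_dvd dvdn_mulr.
  by rewrite mulr1.
by rewrite sumr_const card_ord -(mulr_natl (w ^+ _)) mulKf.
Qed.

(* Orbit sum of the Moebius combination of trivial characters: the same value. *)
Lemma orbit_sum_trivial b e :
  \sum_(d <- divisors n) ((totient n * d)%:R^-1 *
     \sum_(v < n | coprime v n) \sum_(c < n) (n %/ d %| v * b + e * c)%N%:R) *~ moebius d
  = (n %| e)%N%:R * ramanujan_sum b.
Proof.
have phi_neq0 : (totient n)%:R != 0 :> algC by rewrite pnatr_eq0 -lt0n totient_gt0.
transitivity (\sum_(v < n | coprime v n) \sum_(c < n)
                (totient n * n)%:R^-1 * ramanujan_sum (v * b + e * c)).
  under eq_bigr do rewrite mulr_sumr mulrz_suml.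
  rewrite exchange_big; apply: eq_bigr => v _.
  under eq_bigr do rewrite mulr_sumr mulrz_suml.
  by rewrite exchange_big; apply: eq_bigr => c _; rewrite sum_moebius_dvd.
under eq_bigr => v v_unit do
  rewrite -mulr_sumr sum_ramanujan_sum_shift (ramanujan_sumM _ v_unit).
rewrite -mulr_sumr sumr_const card_units_ord -mulr_natr natrM.
by field; rewrite phi_neq0 n_neq0.
Qed.

End RamanujanSums.

Local Close Scope ring_scope.

Lemma eqn_modMl_coprime n v x y : coprime v n ->
  (v * x == v * y %[mod n]) = (x == y %[mod n]).
Proof.
move=> v_unit; wlog le_xy : x y / x <= y.
  move=> IH; case: (leqP x y) => [/IH //|/ltnW/IH].
  by rewrite eq_sym [(x %% _ == _)]eq_sym.
rewrite eq_sym [(x %% _ == _)]eq_sym !eqn_mod_dvd ?leq_mul2l ?le_xy ?orbT //.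
by rewrite -mulnBr Gauss_dvdr // coprime_sym.
Qed.

(* The affine map x |-> v x + c on Z/n, n = m.+1; it is a permutation when v
   is a unit (aff is the identity otherwise, a value that is never used). *)
Definition affine_fun m (v c : nat) (x : 'I_m.+1) : 'I_m.+1 := inZp (v * x + c).
Arguments affine_fun : clear implicits.

Lemma affine_fun_inj m v c : coprime v m.+1 -> injective (affine_fun m v c).
Proof.
move=> v_unit x y /(congr1 val) /= /eqP.
rewrite eqn_modDr eqn_modMl_coprime // !modn_small // => /eqP; exact: val_inj.
Qed.

Definition aff m (v c : nat) : {perm 'I_m.+1} :=
  match coprime v m.+1 =P true with
  | ReflectT v_unit => perm (@affine_fun_inj m v c v_unit)
  | ReflectF _ => 1%g
  end.
Arguments aff : clear implicits.

Section AffinePermutations.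

Variable m : nat.
Local Notation n := m.+1.

Lemma aff_val v c x : coprime v n -> val (aff m v c x) = (v * x + c) %% n.
Proof. by rewrite /aff; case: eqP => // v_unit _; rewrite permE. Qed.

Lemma aff_congr v c v' c' : coprime v n ->
  v = v' %[mod n] -> c = c' %[mod n] -> aff m v c = aff m v' c'.
Proof.
move=> v_unit ev ec; have v'_unit : coprime v' n by rewrite -coprime_modl -ev coprime_modl.
apply/permP => x; apply: val_inj; rewrite !aff_val //.
by rewrite -modnDm -modnMml ev ec modnMml modnDm.
Qed.

Lemma aff_inj v c v' c' : coprime v n -> coprime v' n ->
  aff m v c = aff m v' c' -> (v = v' %[mod n]) /\ (c = c' %[mod n]).
Proof.
move=> v_unit v'_unit E.
have E0 := congr1 (fun s : {perm _} => val (s ord0)) E.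
have E1 := congr1 (fun s : {perm _} => val (s (inZp 1))) E.
move: E0 E1; rewrite /= !aff_val //= !muln0 !add0n => ec.
rewrite -modnDmr ec modnDmr => /eqP; rewrite eqn_modDr -modnMmr.
by rewrite -[in X in _ == X -> _]modnMmr modn_mod !modnMmr !muln1 => /eqP.
Qed.

(* Composition (left to right): (x |-> v x + c) then (x |-> v' x + c'). *)
Lemma affM v c v' c' : coprime v n -> coprime v' n ->
  (aff m v c * aff m v' c' = aff m (v' * v) (v' * c + c'))%g.
Proof.
move=> v_unit v'_unit; have vv'_unit : coprime (v' * v) n by rewrite coprimeMl v_unit v'_unit.
apply/permP => x; apply: val_inj; rewrite permM !aff_val //=.
by rewrite -modnDml modnMmr modnDml mulnDr mulnA addnA.
Qed.

Lemma aff1 : aff m 1 0 = 1%g.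
Proof.
apply/permP => x; apply: val_inj; rewrite perm1 aff_val ?coprime1n //.
by rewrite mul1n addn0 modn_small.
Qed.

Lemma gammaX k : (gamma m ^+ k)%g = aff m 1 k.
Proof.
have gammaE : gamma m = aff m 1 1.
  apply/permP => x; apply: val_inj; rewrite aff_val ?coprime1n // /gamma permE /=.
  by rewrite modnDmr mul1n.
elim: k => [|k IHk]; first by rewrite expg0 aff1.
by rewrite expgSr IHk gammaE affM ?coprime1n // !mul1n addn1.
Qed.

(* Conjugating x |-> u x + b by x |-> v x + c gives x |-> u x + (v b + (1 - u) c),
   where 1 - u is represented by n + 1 - u. *)
Lemma aff_conj u b v c : coprime u n -> coprime v n -> u <= n ->
  (aff m u b ^ aff m v c)%g = aff m u (v * b + (n.+1 - u) * c).
Proof.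
move=> u_unit v_unit u_le_n.
suff E : (aff m v c * aff m u (v * b + (n.+1 - u) * c) = aff m u b * aff m v c)%g.
  by rewrite conjgE -E mulKg.
rewrite !affM //; apply: aff_congr; first by rewrite coprimeMl u_unit v_unit.
  by rewrite mulnC.
have -> : u * c + (v * b + (n.+1 - u) * c) = c * n + (v * b + c).
  rewrite mulnBl.
  have : u * c <= n.+1 * c by rewrite leq_mul2r (leq_trans u_le_n) ?orbT.
  nia.
by rewrite modnMDl.
Qed.

End AffinePermutations.

Definition affine_params m (q : nat) : {set 'I_m.+1 * 'I_m.+1} :=
  setX [set v : 'I_m.+1 | coprime v m.+1] [set c : 'I_m.+1 | q %| c].
Definition affine_set m (q : nat) : {set {perm 'I_m.+1}} :=
  [set aff m p.1 p.2 | p : 'I_m.+1 * 'I_m.+1 in affine_params m q].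

Section AffineSubgroups.

Variable m : nat.
Local Notation n := m.+1.

Lemma aff_params_inj q :
  {in affine_params m q &, injective (fun p : 'I_n * 'I_n => aff m p.1 p.2)}.
Proof.
move=> [v c] [v' c']; rewrite !in_setX !inE /= => /andP[v_unit _] /andP[v'_unit _] E.
have [ev ec] := aff_inj v_unit v'_unit E.
by rewrite !modn_small // in ev ec; congr pair; apply: val_inj.
Qed.

Lemma mem_affine_set q v c : q %| n -> coprime v n ->
  (aff m v c \in affine_set m q) = (q %| c).
Proof.
move=> q_n v_unit; apply/imsetP/idP.
  case=> [[v' c']]; rewrite in_setX !inE /= => /andP[v'_unit q_c'] E.
  have [_ ec] := aff_inj v_unit v'_unit E.
  by rewrite /dvdn -(modn_dvdm c q_n) ec modn_dvdm.
move=> q_c; exists (inZp v, inZp c); last by apply: aff_congr; rewrite //= modn_mod.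
by rewrite in_setX !inE /= coprime_modl v_unit /dvdn modn_dvdm.
Qed.

Lemma affine_setP q s : s \in affine_set m q ->
  exists v c : 'I_n, [/\ coprime v n, q %| c & s = aff m v c].
Proof.
by case/imsetP=> [[v c]]; rewrite in_setX !inE /= => /andP[v_unit q_c] ->; exists v, c.
Qed.

(* For q | n these maps form a group: composition multiplies translation
   parts by units and adds them. *)
Lemma affine_set_group q : q %| n -> group_set (affine_set m q).
Proof.
move=> q_n; apply/group_setP; split; first by rewrite -aff1 mem_affine_set ?coprime1n.
move=> _ _ /affine_setP[v [c [v_unit q_c ->]]] /affine_setP[v' [c' [v'_unit q_c' ->]]].
rewrite affM // mem_affine_set //; last by rewrite coprimeMl v_unit v'_unit.
by rewrite dvdn_add // dvdn_mull.
Qed.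

Lemma card_affine_set q : q %| n -> #|affine_set m q| = totient n * (n %/ q).
Proof.
move=> q_n; have q_gt0 : 0 < q := dvdn_gt0 (ltn0Sn m) q_n.
rewrite card_in_imset; last exact: aff_params_inj.
rewrite cardsX cardsE card_units_ord; congr (_ * _).
rewrite -sum1_card (eq_bigl (fun c : 'I_n => q %| c)); last by move=> c; rewrite inE.
rewrite -(big_mkord (fun c => q %| c) (fun _ => 1)).
by rewrite -{1}(divnK q_n) sum_multiples // sum_nat_const_nat subn0 muln1.
Qed.

Definition affine_group : {group {perm 'I_n}} := Group (affine_set_group (dvd1n n)).

Lemma sum_affine_group (V : nmodType) (F : {perm 'I_n} -> V) :
  (\sum_(s in affine_group) F s = \sum_(v < n | coprime v n) \sum_(c < n) F (aff m v c))%R.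
Proof.
rewrite /= big_imset /=; last exact: aff_params_inj.
rewrite pair_big_dep /=; apply: eq_bigl => -[v c].
by rewrite in_setX !inE dvd1n andbT.
Qed.

End AffineSubgroups.

Section CyclicAndAffineSubgroups.

Variable m : nat.
Local Notation n := m.+1.

Lemma gamma_expg_eq1 k : ((gamma m ^+ k)%g == 1%g) = (n %| k).
Proof.
rewrite gammaX -aff1; apply/eqP/idP.
  by case/aff_inj; rewrite ?coprime1n // mod0n => _ /eqP.
by move/eqP=> k_0; apply: aff_congr; rewrite ?coprime1n ?mod0n.
Qed.

Lemma card_cycle_gamma : #|<[gamma m]>%g| = n.
Proof.
apply/eqP; rewrite -[#|_|]/#[gamma m]%g eqn_dvd order_dvdn gamma_expg_eq1 dvdnn.
by rewrite /= -gamma_expg_eq1 expg_order.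
Qed.

Lemma mem_cycle_gamma u t : coprime u n ->
  (aff m u t \in <[gamma m]>%g) = (u == 1 %[mod n]).
Proof.
move=> u_unit; apply/idP/idP.
  by case/cycleP=> i; rewrite gammaX => /(aff_inj u_unit (coprime1n _)) [->].
by move/eqP=> u_1; rewrite (@aff_congr _ _ _ _ t u_unit u_1) // -gammaX mem_cycle.
Qed.

Lemma cycle_gamma_sub : <[gamma m]>%g \subset affine_group m.
Proof. by rewrite cycle_subG /= -[gamma m]expg1 gammaX mem_affine_set ?coprime1n. Qed.

Lemma units_permP s : s \in units_perm m -> exists2 k, coprime k n & s = aff m k 0.
Proof.
rewrite inE => /existsP[k /andP[k_unit /forallP sE]]; exists (val k) => //.
by apply/permP => i; apply: val_inj; rewrite aff_val // addn0 (eqP (sE i)).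
Qed.

Lemma affine_subE d : d \in divisors n ->
  (affine_sub m d :=: affine_set m (n %/ d))%g.
Proof.
rewrite -dvdn_divisors // => d_n; have q_n : n %/ d %| n := dvdn_div d_n.
set q := n %/ d in q_n *; have K := affine_set_group q_n.
apply/eqP; rewrite eqEsubset; apply/andP; split.
  rewrite /= -[affine_set m q]/(gval (Group K)) gen_subG -(mulGid (Group K)) mulgSS //.
    by rewrite cycle_subG gammaX /= mem_affine_set ?coprime1n.
  by apply/subsetP => _ /units_permP[k k_unit ->]; rewrite /= mem_affine_set ?dvdn0.
apply/subsetP => _ /affine_setP[v [c [v_unit q_c ->]]].
have -> : aff m v c = (aff m v 0 * aff m 1 c)%g.
  by rewrite affM ?coprime1n // mul1n muln0.
apply: groupM; apply: mem_gen.
  rewrite -[aff m v 0]mul1g mem_mulg ?group1 // inE; apply/existsP.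
  exists (inZp v); rewrite /= coprime_modl v_unit /=; apply/forallP => i.
  by apply/eqP; apply: val_inj; rewrite aff_val //= addn0 modnMml.
rewrite -[aff m 1 c]mulg1 mem_mulg //.
  by case/dvdnP: q_c => k ->; rewrite -gammaX mulnC expgM mem_cycle.
rewrite inE; apply/existsP; exists (inZp 1); rewrite /= coprime_modl coprime1n /=.
by apply/forallP => i; apply/eqP; apply: val_inj; rewrite perm1 /= modnMml mul1n modn_small.
Qed.

Lemma affine_sub_sub d : d \in divisors n -> affine_sub m d \subset affine_group m.
Proof.
move=> d_n; rewrite (affine_subE d_n); apply/subsetP => _ /affine_setP[v [c [v_unit _ ->]]].
by rewrite /= mem_affine_set.
Qed.

Lemma card_affine_sub d : d \in divisors n -> #|affine_sub m d| = totient n * d.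
Proof.
rewrite -!dvdn_divisors // => d_n; rewrite affine_subE -?dvdn_divisors //.
by rewrite card_affine_set ?dvdn_div // divnA // mulKn.
Qed.

Lemma mem_affine_sub d u t : d \in divisors n -> coprime u n ->
  (aff m u t \in affine_sub m d) = (n %/ d %| t).
Proof.
move=> d_n u_unit; rewrite (affine_subE d_n) mem_affine_set // dvdn_div //.
by rewrite dvdn_divisors.
Qed.

End CyclicAndAffineSubgroups.

Local Open Scope ring_scope.

Lemma mulrz_cfunE (gT : finGroupType) (B : {set gT}) (phi : 'CF(B)) (z : int) x :
  (phi *~ z) x = phi x *~ z.
Proof.
case: z => k; first by rewrite -!pmulrn muln_cfunE.
by rewrite !NegzE !mulrNz cfunE -!pmulrn muln_cfunE.
Qed.

Section FaithfulCharacter.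

Variables (m : nat) (chi : 'CF(<[gamma m]>)).
Hypotheses (chi_lin : chi \is a linear_char) (chi_faithful : cfaithful chi).
Local Notation n := m.+1.

Lemma chi_gamma_prim : n.-primitive_root (chi (gamma m)).
Proof.
have chi_exp_eq1 k : (chi (gamma m) ^+ k == 1) = (n %| k)%N.
  rewrite -gamma_expg_eq1 -lin_charX ?cycle_id //.
  apply/eqP/eqP => [chi_k|->]; last exact: lin_char1.
  have : (gamma m ^+ k)%g \in cfker chi.
    by rewrite cfkerEchar ?lin_charW // inE mem_cycle lin_char1 // chi_k eqxx.
  by move: chi_faithful; rewrite cfaithfulE => /subsetP ker1 /ker1; rewrite inE => /eqP.
have chi_n : chi (gamma m) ^+ n = 1 by apply/eqP; rewrite chi_exp_eq1.
have [k k_prim k_n] := prim_order_exists (ltn0Sn m) chi_n.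
have k_eq : k = n.
  by apply/eqP; rewrite eqn_dvd k_n -chi_exp_eq1 (prim_expr_order k_prim) /=.
by rewrite k_eq in k_prim.
Qed.

(* chi, extended by 0, on the affine map x |-> u x + t: it is nonzero only on
   translations (u = 1 mod n, i.e. n | n + 1 - u). *)
Lemma chi_aff u t : coprime u n -> (u <= n)%N ->
  chi (aff m u t) = (n %| n.+1 - u)%N%:R * chi (gamma m) ^+ t.
Proof.
move=> u_unit u_le_n.
have -> : (n %| n.+1 - u)%N = (u == 1 %[mod n])%N.
  by rewrite -(eqn_mod_dvd _ (leqW u_le_n)) eq_sym -[n.+1]addn1 modnDl.
have [u_1|u_n1] := boolP (u == 1 %[mod n])%N; last first.
  by rewrite mul0r cfun0 // mem_cycle_gamma // (negbTE u_n1).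
rewrite mul1r (aff_congr u_unit (eqP u_1) (erefl (t %% n)%N)) -gammaX.
by rewrite lin_charX ?cycle_id.
Qed.

(* The theorem inside the affine group N = (Z/n) x| (Z/n)^x: at x |-> u x + b
   the orbit sums of both sides under N-conjugation are [n | 1 - u] c_n(b). *)
Lemma induced_to_affine_group :
  'Ind[affine_group m] chi =
  \sum_(d <- divisors n) ('Ind[affine_group m] (1 : 'CF(affine_sub m d))) *~ moebius d.
Proof.
apply/cfunP => x; have [x_N|x_notN] := boolP (x \in affine_group m); last by rewrite !cfun0.
case/affine_setP: x_N => u [b [u_unit _ ->]].
have u_le_n := ltnW (ltn_ord u).
rewrite sum_cfunE cfIndE ?cycle_gamma_sub // sum_affine_group card_cycle_gamma.
under eq_bigr => v v_unit do under eq_bigr => c _ do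
  rewrite aff_conj // chi_aff //.
rewrite (orbit_sum_character chi_gamma_prim) -(orbit_sum_trivial chi_gamma_prim).
apply: eq_big_seq => d d_n; rewrite mulrz_cfunE cfIndE ?affine_sub_sub //.
rewrite card_affine_sub // sum_affine_group; congr ((_ * _) *~ _).
apply: eq_bigr => v v_unit; apply: eq_bigr => c _.
by rewrite cfun1E aff_conj // mem_affine_sub.
Qed.

End FaithfulCharacter.

(* Induce the identity inside N up to S_n: induction is transitive and linear. *)
Theorem mainTheorem5 (m : nat) (chi : 'CF(<[gamma m]>))
    (chi_lin : chi \is a linear_char) (chi_faithful : cfaithful chi) :
  'Ind[[set: {perm 'I_m.+1}]] chi =
  \sum_(d <- divisors m.+1) ('Ind[[set: {perm 'I_m.+1}]] (1 : 'CF(affine_sub m d))) *~ moebius d.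
Proof.
rewrite -(cfIndInd _ (subsetT (affine_group m)) (cycle_gamma_sub m)).
rewrite induced_to_affine_group // linear_sum; apply: eq_big_seq => d d_n.
by rewrite -(cfIndInd _ (subsetT (affine_group m)) (affine_sub_sub d_n)) raddfMz.
Qed.
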